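(* Let $\mathcal{C}$ be a component of class $i$ (at an upper layer $l$) which has at least $m$ pairwise internally vertex-disjoint long connector paths, where $m=\Omega(k)$. Then every maximal matching in $\mathcal{H}_i[\mathcal{C}]$ has cardinality $\Omega(k)$ (namely at least $m/2$).
   Context: $G=(V,E)$ is a finite undirected graph with vertex connectivity $k$. Fix an integer $L$. The virtual graph $\mathcal{G}$ contains $3L$ copies of each $v\in V$: each lower layer $1,\dots,L$ contains one copy of every node; each upper layer $L+1,\dots,2L$ contains a type-1 copy and a type-2 copy of every node. Every copy of $v$ is adjacent to all other copies of $v$ and to all copies of each neighbor of $v$ in $G$. $\Psi$ maps virtual nodes to real nodes. There are classes $1,\dots,t$. For a fixed upper layer $l$, nodes of layers $1,\dots,l-1$ are old nodes, each assigned a class; a component of class $i$ is a connected component of the subgraph induced by old nodes of class $i$. A long connector path for $\mathcal{C}$ is a path $(s,v,w,u)$ with $s\in\mathcal{C}$, $u$ in a component $\mathcal{C}'\neq\mathcal{C}$ of class $i$ with $\Psi(\mathcal{C})\cap\Psi(\mathcal{C}')=\emptyset$, $v$ a type-2 and $w$ a type-1 node of layer $l$, $v$ having no neighbor in any component of class $i$ other than $\mathcal{C}$ and $w$ having no neighbor in $\mathcal{C}$; its internal vertices are $v,w$, and paths are internally vertex-disjoint if their sets of internal vertices are pairwise disjoint. The helper graph $\mathcal{H}_i[\mathcal{C}]$: for each type-2 node $v$ of layer $l$, a node $v_{\mathcal{C}}$ is added iff $\Psi(v)\notin\Psi(\mathcal{C})$, $v$ has a neighbor in $\mathcal{C}$,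 and $v$ has no neighbor in another component of class $i$; for each such $v_{\mathcal{C}}$ and each type-1 neighbor $w$ of $v$ on layer $l$ that has a neighbor in some component $\mathcal{C}'\neq\mathcal{C}$ of class $i$ but no neighbor in $\mathcal{C}$, a node $w_{\mathcal{C}}$ and the edge $\{v_{\mathcal{C}},w_{\mathcal{C}}\}$ are added. *)

From mathcomp Require Import all_boot.
Set Implicit Arguments. Unset Strict Implicit. Unset Printing Implicit Defensive.

(* Virtual graph: lower copies (v, j) sit on layer j+1 (layers 1..L);
   upper copies (v, j, b) sit on layer L+j+1 (layers L+1..2L),
   b = false : type-1 copy, b = true : type-2 copy. *)
Section Virtual.
Variables (V : finType) (L : nat).

Definition vnode : finType := ((V * 'I_L) + (V * 'I_L * bool))%type.

Definition Psi (x : vnode) : V :=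
  match x with inl (v, _) => v | inr (v, _, _) => v end.

Definition layer (x : vnode) : nat :=
  match x with inl (_, j) => j.+1 | inr (_, j, _) => L + j.+1 end.

Definition is_type1 (x : vnode) : bool :=
  match x with inr (_, _, false) => true | _ => false end.
Definition is_type2 (x : vnode) : bool :=
  match x with inr (_, _, true) => true | _ => false end.

Variable adjG : rel V.

Definition vadj : rel vnode :=
  fun x y => (x != y) && ((Psi x == Psi y) || adjG (Psi x) (Psi y)).

Variables (t : nat) (cls : vnode -> 'I_t) (l : nat).

Definition old (x : vnode) : bool := layer x < l.
Definition in_class (i : 'I_t) (x : vnode) : bool := old x && (cls x == i).
Definition class_rel (i : 'I_t) : rel vnode :=
  fun x y => [&& vadj x y, in_class i x & in_class i y].

Definition component (i : 'I_t) (C : {set vnode}) : Prop :=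
  exists2 x, in_class i x & C = [set y | connect (class_rel i) x y].

Definition has_nbr_in (x : vnode) (C : {set vnode}) : bool :=
  [exists y in C, vadj x y].

Definition long_connector (i : 'I_t) (C : {set vnode})
    (p : vnode * vnode * vnode * vnode) : Prop :=
  let: (s, v, w, u) := p in
  [/\ s \in C,
      exists C', [/\ component i C', C' <> C, u \in C' &
                     (Psi @: C) :&: (Psi @: C') = set0],
      is_type2 v /\ layer v = l,
      is_type1 w /\ layer w = l &
      [/\ forall C'', component i C'' -> C'' <> C -> ~~ has_nbr_in v C'',
          ~~ has_nbr_in w C &
          [/\ vadj s v, vadj v w & vadj w u]]].

Definition internal (p : vnode * vnode * vnode * vnode) : {set vnode} :=
  let: (_, v, w, _) := p in [set v; w].

(* helper graph H_i[C] (nodes v_C, w_C identified with v, w) *)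
Definition helper_vnode (i : 'I_t) (C : {set vnode}) (v : vnode) : Prop :=
  [/\ is_type2 v /\ layer v = l, Psi v \notin Psi @: C, has_nbr_in v C &
      forall C'', component i C'' -> C'' <> C -> ~~ has_nbr_in v C''].

Definition helper_wnode (i : 'I_t) (C : {set vnode}) (v w : vnode) : Prop :=
  [/\ is_type1 w /\ layer w = l, vadj v w,
      exists C', [/\ component i C', C' <> C & has_nbr_in w C'] &
      ~~ has_nbr_in w C].

Definition helper_edge (i : 'I_t) (C : {set vnode}) (x y : vnode) : Prop :=
  (helper_vnode i C x /\ helper_wnode i C x y) \/
  (helper_vnode i C y /\ helper_wnode i C y x).

End Virtual.

Definition matching (T : finType) (E : T -> T -> Prop) (M : {set {set T}}) : Prop :=
  (forall e, e \in M -> exists x y, E x y /\ e = [set x; y]) /\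
  (forall e1 e2, e1 \in M -> e2 \in M -> e1 != e2 -> [disjoint e1 & e2]).

Definition maximal_matching (T : finType) (E : T -> T -> Prop) (M : {set {set T}}) : Prop :=
  matching E M /\ (forall M', matching E M' -> M \subset M' -> M' = M).

From mathcomp Require Import all_boot.

(* The two internal vertices v, w of a long connector path for C form an edge
   of the helper graph H_i[C]; as the paths are internally disjoint, a maximal
   matching must cover a vertex of each of them, i.e. at least m vertices, and
   a matching with |M| edges covers at most 2|M| vertices. *)

Section Matchings.
Context {T : finType} {E : T -> T -> Prop}.

Lemma card_cover_matching {M : {set {set T}}} :
  matching E M -> #|cover M| <= 2 * #|M|.
Proof.
move=> [M_edges _]; apply: leq_trans (leq_card_cover M) _.
rewrite mulnC -sum_nat_const; apply: leq_sum => e eM.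
by have [x [y [_ ->]]] := M_edges e eM; rewrite cards2; case: (x != y).
Qed.

Lemma maximal_matching_cover {M : {set {set T}}} {x y : T} :
  maximal_matching E M -> E x y -> (x \in cover M) || (y \in cover M).
Proof.
move=> [[M_edges M_disj] M_max] Exy; apply/norP => -[xM yM].
have xy_disj e : e \in M -> [disjoint [set x; y] & e].
  move=> eM.
  have notin_e z : z \notin cover M -> z \notin e.
    by apply: contra => ze; apply/bigcupP; exists e.
  rewrite disjoints_subset subUset !sub1set !inE.
  by rewrite (negPf (notin_e x xM)) (negPf (notin_e y yM)).
have : matching E ([set x; y] |: M).
  split=> [e /setU1P [->|/M_edges //]|e1 e2]; first by exists x, y.
  move=> /setU1P [->|e1M] /setU1P [->|e2M] e12; rewrite ?eqxx // in e12.
  - exact: xy_disj.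
  - by rewrite disjoint_sym; apply: xy_disj.
  - exact: M_disj.
move/M_max/(_ (subsetUr _ _)) => M_ext.
have xyM : [set x; y] \in M by rewrite -M_ext setU11.
by case/negP: xM; apply/bigcupP; exists [set x; y]; rewrite ?set21.
Qed.

End Matchings.

Lemma card_le_disjoint_transversal (I T : finType) (A : I -> {set T}) (S : {set T}) :
  (forall j1 j2, j1 != j2 -> [disjoint A j1 & A j2]) ->
  (forall j, ~~ [disjoint A j & S]) -> #|I| <= #|S|.
Proof.
move=> A_disj A_meets.
have pick_hit j : exists x, (x \in A j) && (x \in S).
  by have /pred0Pn [x /andP hit] := A_meets j; exists x; apply/andP.
pose f j := xchoose (pick_hit j).
have f_hit j : (f j \in A j) && (f j \in S) := xchooseP (pick_hit j).
have f_inj : injective f.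
  move=> j1 j2 f12; apply/eqP/negPn/negP => /A_disj/pred0P/(_ (f j1)) /=.
  by have /andP [-> _] := f_hit j1; rewrite f12; have /andP [-> _] := f_hit j2.
rewrite -(card_imset _ f_inj) subset_leq_card //.
by apply/subsetP => _ /imsetP [j _ ->]; have /andP [] := f_hit j.
Qed.

Section HelperGraph.
Context {V : finType} {L : nat} {adjG : rel V} {t : nat}.
Context {cls : vnode V L -> 'I_t} {l : nat} {i : 'I_t}.
Hypothesis adjG_sym : symmetric adjG.

Lemma connect_in_class {x y} :
  in_class cls l i x -> connect (class_rel adjG cls l i) x y -> in_class cls l i y.
Proof.
move=> + /connectP [p + ->]; elim: p x => [|z p IH] x //= x_i.
by case/andP => /and3P [_ _ z_i]; apply: IH.
Qed.

Lemma component_in_class {C x} :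
  component adjG cls l i C -> x \in C -> in_class cls l i x.
Proof. by case=> x0 x0_i ->; rewrite inE; apply: connect_in_class. Qed.

Lemma vadj_sym : symmetric (@vadj V L adjG).
Proof. by move=> x y; rewrite /vadj eq_sym [Psi y == _]eq_sym adjG_sym. Qed.

Lemma long_connector_helper_edge {C s v w u} :
  component adjG cls l i C ->
  long_connector adjG cls l i C (s, v, w, u) -> helper_edge adjG cls l i C v w.
Proof.
move=> HC [sC [C' [HC' C'C uC' _]] [v2 lv] [w1 lw] [v_nbr wC [sv vw wu]]].
left; split; split=> //; last first.
- by exists C'; split=> //; apply/existsP; exists u; rewrite uC'.
- by apply/existsP; exists s; rewrite sC vadj_sym.
apply/imsetP => -[c cC Psi_vc].
(* c is old, so c <> w (w is on layer l), and w is adjacent to c as to v *)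
have /andP [c_old _] := component_in_class HC cC.
case/existsP: wC; exists c; rewrite cC /vadj -Psi_vc.
move: vw; rewrite vadj_sym /vadj => /andP [_ ->]; rewrite andbT.
by apply: contraTneq c_old => <-; rewrite /old lw ltnn.
Qed.

End HelperGraph.

Theorem lemma7 (V : finType) (adjG : rel V)
  (adjG_sym : symmetric adjG) (adjG_irr : irreflexive adjG)
  (L t : nat) (cls : vnode V L -> 'I_t) (l : nat) (Hl : L < l <= L + L)
  (i : 'I_t) (C : {set vnode V L})
  (HC : component adjG cls l i C)
  (m : nat) (P : 'I_m -> vnode V L * vnode V L * vnode V L * vnode V L)
  (HP : forall j, long_connector adjG cls l i C (P j))
  (Hdisj : forall j1 j2, j1 != j2 -> [disjoint internal (P j1) & internal (P j2)])
  (M : {set {set vnode V L}})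
  (HM : maximal_matching (helper_edge adjG cls l i C) M) :
  m <= 2 * #|M|.
Proof.
have P_hit j : ~~ [disjoint internal (P j) & cover M].
  move: (HP j); case: (P j) => [[[s v] w] u] /= Pj.
  have := maximal_matching_cover HM (long_connector_helper_edge adjG_sym HC Pj).
  by case/orP => vw_cov; apply/pred0Pn; [exists v | exists w];
     rewrite /= !inE eqxx ?orbT.
apply: leq_trans (card_cover_matching HM.1).
by rewrite -[m]card_ord; apply: card_le_disjoint_transversal Hdisj P_hit.
Qed.
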